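(* Let $0<q<1$, let $m\in\{0,1,2,\dots\}$ and let $\lambda\in\left]0,\,q^m(1-q)^{-1}\right[$. Let $X\sim\mathscr{P}(\lambda;q,m)$ be the discrete random variable with $\Pr(X=j)=p_j(\lambda;q,m)$, $j=0,1,2,\dots$, as defined in the context. Then for every real $t$ with $|t|\le 1$, the probability generating function $\mathcal{G}_X(t):=\mathbb{E}(t^X)=\sum_{j\ge0}t^j p_j(\lambda;q,m)$ is given by \[ \mathcal{G}_{X}(t)=\frac{t^m\,(q^{-m}(1-q)\lambda;q)_\infty}{(q^{-m}t\lambda(1-q);q)_\infty}\;{}_3\phi_2\left(\begin{matrix}q^{-m},\,q/t,\,t\\ q^{1-m}(1-q)\lambda,\,q\end{matrix}\Big|\,q;\, q\lambda(1-q)\right), \] where the ${}_3\phi_2$ series terminates (it has at most $m+1$ nonzero terms).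
   Context: Throughout $0<q<1$. For $a\in\mathbb{C}$: $(a;q)_0=1$, $(a;q)_n=\prod_{k=0}^{n-1}(1-aq^k)$ for $n\ge1$, $(a;q)_\infty=\prod_{k\ge0}(1-aq^k)$, and $(a_1,\dots,a_l;q)_n=\prod_{i=1}^l(a_i;q)_n$. The $q$-number is $[a]_q=(1-q^a)/(1-q)$. The basic hypergeometric series is ${}_{s+1}\phi_s\left(\begin{matrix}a_1,\dots,a_{s+1}\\ b_1,\dots,b_s\end{matrix}\Big|q;\xi\right)=\sum_{k\ge0}\frac{(a_1,\dots,a_{s+1};q)_k}{(b_1,\dots,b_s;q)_k}\frac{\xi^k}{(q;q)_k}$. The Wall (little $q$-Laguerre) polynomial is $P_n(x;a|q)={}_2\phi_1\left(\begin{matrix}q^{-n},0\\ aq\end{matrix}\Big|q;qx\right)=\sum_{k=0}^n\frac{(q^{-n};q)_k}{(aq;q)_k}\frac{(qx)^k}{(q;q)_k}$. Write $m\wedge j=\min(m,j)$, $m\vee j=\max(m,j)$, $\binom{n}{2}=n(n-1)/2$. For $0<\lambda<q^m/(1-q)$ set $\mathcal{N}_{q,m}(\lambda)=\frac{(q^{1-m}(1-q)\lambda;q)_m}{q^m\,(q^{-m}(1-q)\lambda;q)_\infty}$ and \[ p_j(\lambda;q,m)=\frac{q^{2\binom{m\wedge j}{2}}(1-q)^{|m-j|}\lambda^{|m-j|}}{\mathcal{N}_{q,m}(\lambda)\,q^{mj}(q;q)_j(q;q)_m}\left(\frac{(q;q)_{m\vee j}}{(q;q)_{|m-j|}}P_{m\wedge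 j}\big((1-q)\lambda;q^{|m-j|}\,|\,q\big)\right)^2,\quad j=0,1,2,\dots \] These are the probabilities $|\langle\Psi^q_{z,m},\phi^q_j\rangle|^2$ ($\lambda=z\bar z$) of a generalized $q$-deformed coherent state in a $q$-number-state basis; the distribution is called the generalized Euler distribution $\mathscr{P}(\lambda;q,m)$ of index $m$. *)

From Stdlib Require Import Reals Lra Lia.
From Coquelicot Require Import Coquelicot.
Open Scope R_scope.

Fixpoint qpoch (a q : R) (n : nat) : R :=
  match n with
  | O => 1
  | S n' => qpoch a q n' * (1 - a * q ^ n')
  end.

Definition qpoch_inf (a q : R) : R := real (Lim_seq (fun n => qpoch a q n)).

Definition phi32_term (a1 a2 a3 b1 b2 q xi : R) (k : nat) : R :=
  (qpoch a1 q k * qpoch a2 q k * qpoch a3 q k) / (qpoch b1 q k * qpoch b2 q k)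
  * xi ^ k / qpoch q q k.

Definition phi32 (a1 a2 a3 b1 b2 q xi : R) : R :=
  Series (phi32_term a1 a2 a3 b1 b2 q xi).

(* Wall (little q-Laguerre) polynomial P_n(x; a | q) = 2phi1(q^{-n}, 0; aq | q; qx). *)
Definition wall (n : nat) (x a q : R) : R :=
  sum_f_R0 (fun k => qpoch (/ q ^ n) q k / qpoch (a * q) q k * (q * x) ^ k / qpoch q q k) n.

Definition Nqm (q : R) (m : nat) (lam : R) : R :=
  qpoch (q * / q ^ m * (1 - q) * lam) q m / (q ^ m * qpoch_inf (/ q ^ m * (1 - q) * lam) q).

Definition pj (lam q : R) (m j : nat) : R :=
  let mn := Nat.min m j in
  let mx := Nat.max m j in
  let d := (mx - mn)%nat in
  q ^ (mn * (mn - 1)) * (1 - q) ^ d * lam ^ d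
  / (Nqm q m lam * q ^ (m * j) * qpoch q q j * qpoch q q m)
  * (qpoch q q mx / qpoch q q d * wall mn ((1 - q) * lam) (q ^ d) q) ^ 2.

From Stdlib Require Import Reals Lra Lia.
From Coquelicot Require Import Coquelicot.
Open Scope R_scope.

(* Put x = (1 - q) lam and c = x / q^m, so that 0 < c < 1.  Read backwards, the Wall
   polynomial in p_j is a q-Charlier polynomial
     C_m(j) = sum_l [m, l]_q x^(-l) (q^j - 1) (q^j - q) ... (q^j - q^(l-1)),
   which is symmetric in m and j; this removes the min/max in the definition of p_j.
   Expanding C_m(j) = sum_k d_k q^(kj) with d_k = [m, k]_q (1/x; q)_(m-k) x^(-k) gives
     p_j = K c^j / (q; q)_j * sum_(k,k') d_k d_k' q^((k+k') j).
   Summing t^j p_j with Euler's identity sum_j z^j / (q; q)_j = 1 / (z; q)_oo yields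
     G(t) = K / (tc; q)_oo * sum_(k,k') d_k d_k' (tc; q)_(k+k').
   By q-Chu-Vandermonde the sum over k' collapses to (t q^(k-m); q)_m; expanding
   (tc; q)_k and resumming once more with q-Chu-Vandermonde leaves exactly the
   m + 1 terms of the terminating 3phi2. *)

(** * Finite sums and products *)

Fixpoint sum_lt (n : nat) (f : nat -> R) : R :=
  match n with O => 0 | S n' => sum_lt n' f + f n' end.
Fixpoint prod_lt (n : nat) (f : nat -> R) : R :=
  match n with O => 1 | S n' => prod_lt n' f * f n' end.

Lemma sum_lt_ext n f g : (forall i, (i < n)%nat -> f i = g i) -> sum_lt n f = sum_lt n g.
Proof. induction n; simpl; intros H; auto. rewrite IHn, H; auto. Qed.

Lemma prod_lt_ext n f g : (forall i, (i < n)%nat -> f i = g i) -> prod_lt n f = prod_lt n g.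
Proof. induction n; simpl; intros H; auto. rewrite IHn, H; auto. Qed.

Lemma sum_lt_plus n f g : sum_lt n (fun i => f i + g i) = sum_lt n f + sum_lt n g.
Proof. induction n; simpl; [ring | rewrite IHn; ring]. Qed.

Lemma sum_lt_scal n c f : sum_lt n (fun i => c * f i) = c * sum_lt n f.
Proof. induction n; simpl; [ring | rewrite IHn; ring]. Qed.

Lemma sum_lt_mult n n' f g :
  sum_lt n f * sum_lt n' g = sum_lt n (fun i => sum_lt n' (fun j => f i * g j)).
Proof. induction n; simpl; [ring | rewrite <- IHn, sum_lt_scal; ring]. Qed.

Lemma sum_lt_eq0 n f : (forall i, (i < n)%nat -> f i = 0) -> sum_lt n f = 0.
Proof.
  intros H. rewrite (sum_lt_ext n f (fun _ => 0 * 0)), sum_lt_scal; [ring |].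
  intros. rewrite H; auto; ring.
Qed.

Lemma prod_lt_mult n f g : prod_lt n (fun i => f i * g i) = prod_lt n f * prod_lt n g.
Proof. induction n; simpl; [ring | rewrite IHn; ring]. Qed.

Lemma prod_lt_const n c : prod_lt n (fun _ => c) = c ^ n.
Proof. induction n; simpl; [ring | rewrite IHn; ring]. Qed.

Lemma sum_lt_add a b f : sum_lt (a + b) f = sum_lt a f + sum_lt b (fun i => f (a + i)%nat).
Proof.
  induction b; simpl; [rewrite Nat.add_0_r; ring |].
  rewrite Nat.add_succ_r. simpl. rewrite IHb. ring.
Qed.

Lemma prod_lt_add a b f : prod_lt (a + b) f = prod_lt a f * prod_lt b (fun i => f (a + i)%nat).
Proof.
  induction b; simpl; [rewrite Nat.add_0_r; ring |].
  rewrite Nat.add_succ_r. simpl. rewrite IHb. ring.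
Qed.

Lemma sum_lt_Sl n f : sum_lt (S n) f = f O + sum_lt n (fun i => f (S i)).
Proof. rewrite <- Nat.add_1_l, sum_lt_add. simpl. ring. Qed.

Lemma prod_lt_Sl n f : prod_lt (S n) f = f O * prod_lt n (fun i => f (S i)).
Proof. rewrite <- Nat.add_1_l, prod_lt_add. simpl. ring. Qed.

Lemma sum_lt_rev n f : sum_lt n f = sum_lt n (fun i => f (n - 1 - i)%nat).
Proof.
  induction n; auto.
  rewrite (sum_lt_Sl n (fun i => f (S n - 1 - i)%nat)), Rplus_comm.
  change (sum_lt (S n) f) with (sum_lt n f + f n). rewrite IHn.
  replace (S n - 1 - 0)%nat with n by lia.
  f_equal. apply sum_lt_ext; intros i Hi. f_equal. lia.
Qed.

Lemma prod_lt_rev n f : prod_lt n f = prod_lt n (fun i => f (n - 1 - i)%nat).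
Proof.
  induction n; auto.
  rewrite (prod_lt_Sl n (fun i => f (S n - 1 - i)%nat)), Rmult_comm.
  change (prod_lt (S n) f) with (prod_lt n f * f n). rewrite IHn.
  replace (S n - 1 - 0)%nat with n by lia.
  f_equal. apply prod_lt_ext; intros i Hi. f_equal. lia.
Qed.

Lemma sum_lt_pad n n' f :
  (n <= n')%nat -> (forall i, (n <= i < n')%nat -> f i = 0) -> sum_lt n' f = sum_lt n f.
Proof.
  intros Hn Hf. replace n' with (n + (n' - n))%nat by lia.
  rewrite sum_lt_add, (sum_lt_eq0 (n' - n)); [ring |]. intros i Hi. apply Hf. lia.
Qed.

Lemma sum_lt_swap n m g :
  sum_lt n (fun i => sum_lt m (fun j => g i j)) = sum_lt m (fun j => sum_lt n (fun i => g i j)).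
Proof. induction n; simpl; [rewrite sum_lt_eq0; auto | rewrite IHn, <- sum_lt_plus; auto]. Qed.

Lemma sum_lt_triangle m g :
  sum_lt (S m) (fun k => sum_lt (S k) (fun j => g j k)) =
  sum_lt (S m) (fun j => sum_lt (S m - j) (fun i => g j (j + i)%nat)).
Proof.
  set (h j k := if (j <=? k)%nat then g j k else 0).
  transitivity (sum_lt (S m) (fun k => sum_lt (S m) (fun j => h j k))).
  { apply sum_lt_ext; intros k Hk. rewrite (sum_lt_pad (S k) (S m)); try lia.
    - apply sum_lt_ext; intros j Hj. unfold h. destruct (Nat.leb_spec j k); auto; lia.
    - intros j Hj. unfold h. destruct (Nat.leb_spec j k); auto; lia. }
  rewrite sum_lt_swap. apply sum_lt_ext; intros j Hj.
  replace (S m) with (j + (S m - j))%nat at 1 by lia.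
  rewrite sum_lt_add, (sum_lt_eq0 j), Rplus_0_l.
  - apply sum_lt_ext; intros i Hi. unfold h. destruct (Nat.leb_spec j (j + i)); auto; lia.
  - intros i Hi. unfold h. destruct (Nat.leb_spec j i); auto; lia.
Qed.

Lemma sum_f_R0_sum_lt f n : sum_f_R0 f n = sum_lt (S n) f.
Proof. induction n; simpl; [ring | rewrite IHn; reflexivity]. Qed.

Lemma sum_n_sum_lt f n : sum_n f n = sum_lt (S n) f.
Proof.
  induction n; [rewrite sum_O; simpl; apply eq_sym, Rplus_0_l |].
  rewrite sum_Sn, IHn. reflexivity.
Qed.

(** * q-Pochhammer symbols and Gaussian binomials *)

(* q ^ (n (n - 1) / 2), kept as a product to avoid nat division. *)
Definition qtri (q : R) (n : nat) : R := prod_lt n (fun i => q ^ i).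

Definition qbinom (q : R) (N i : nat) : R :=
  if (i <=? N)%nat then qpoch q q N / (qpoch q q i * qpoch q q (N - i)) else 0.

Lemma sign_sqr r : (-1) ^ r * (-1) ^ r = 1.
Proof. rewrite <- Rpow_mult_distr. replace (-1 * -1) with 1 by ring. apply pow1. Qed.

Lemma sign_neq0 r : (-1) ^ r <> 0.
Proof. apply pow_nonzero; lra. Qed.

Lemma pow_pos_le1 q n : 0 < q < 1 -> 0 < q ^ n <= 1.
Proof. intros Hq. induction n; simpl; split; try lra; nra. Qed.

Lemma one_sub_qpowS_neq0 q n : 0 < q < 1 -> 1 - q * q ^ n <> 0.
Proof. intros Hq. pose proof (pow_pos_le1 q n Hq). nra. Qed.

Lemma qpoch_S a q n : qpoch a q (S n) = qpoch a q n * (1 - a * q ^ n).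
Proof. reflexivity. Qed.

Lemma qpoch_prod a q n : qpoch a q n = prod_lt n (fun i => 1 - a * q ^ i).
Proof. induction n; simpl; auto. rewrite IHn; auto. Qed.

Lemma qpoch_add a q n k : qpoch a q (n + k) = qpoch a q n * qpoch (a * q ^ n) q k.
Proof.
  rewrite !qpoch_prod, prod_lt_add. f_equal.
  apply prod_lt_ext; intros. rewrite pow_add. ring.
Qed.

Lemma qpoch_0 q n : qpoch 0 q n = 1.
Proof. induction n; simpl; auto. rewrite IHn; ring. Qed.

Lemma qpoch_eq0 a q n i : (i < n)%nat -> a * q ^ i = 1 -> qpoch a q n = 0.
Proof.
  intros Hi Ha. replace n with (S i + (n - S i))%nat by lia.
  rewrite qpoch_add. simpl. rewrite Ha. ring.
Qed.

Lemma qpoch_qq_pos q n : 0 < q < 1 -> 0 < qpoch q q n.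
Proof.
  intros Hq. induction n; simpl; [lra |].
  pose proof (pow_pos_le1 q n Hq). apply Rmult_lt_0_compat; nra.
Qed.

Lemma qpoch_qq_neq0 q n : 0 < q < 1 -> qpoch q q n <> 0.
Proof. intros Hq. pose proof (qpoch_qq_pos q n Hq). lra. Qed.

Lemma qtri_pos q n : 0 < q -> 0 < qtri q n.
Proof.
  intros Hq. unfold qtri. induction n; simpl; [lra |].
  apply Rmult_lt_0_compat; auto. apply pow_lt; auto.
Qed.

Lemma qtri_neq0 q n : 0 < q -> qtri q n <> 0.
Proof. intros Hq. pose proof (qtri_pos q n Hq). lra. Qed.

Create HintDb nonzero discriminated.
#[local] Hint Resolve pow_lt pow_nonzero sign_neq0 qtri_neq0 qpoch_qq_neq0 one_sub_qpowS_neq0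
  Rinv_neq_0_compat Rmult_integral_contrapositive_currified : nonzero.
#[local] Hint Extern 2 (_ <> _) => lra : nonzero.
#[local] Hint Extern 2 (_ < _) => lra : nonzero.
#[local] Hint Extern 1 (_ / _ <> 0) => unfold Rdiv : nonzero.

Ltac nonzero := repeat split; auto with nonzero.

Lemma qtri_add q a b : qtri q (a + b) = qtri q a * qtri q b * q ^ (a * b).
Proof.
  unfold qtri. rewrite prod_lt_add, (prod_lt_ext b _ (fun i => q ^ a * q ^ i)).
  - rewrite prod_lt_mult, prod_lt_const, pow_mult.
    change (fun i => q ^ i) with (pow q). ring.
  - intros. apply pow_add.
Qed.

Lemma qtri_sqr_pow q k : qtri q k * qtri q k * q ^ k = q ^ (k * k).
Proof.
  induction k; [unfold qtri; simpl; ring |].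
  unfold qtri in *; simpl prod_lt.
  replace (S k * S k)%nat with (k * k + (k + k + 1))%nat by lia.
  rewrite !pow_add, <- IHk. simpl. ring.
Qed.

Lemma pow_qtri_sqr q n : q ^ (n * (n - 1)) = qtri q n * qtri q n.
Proof.
  induction n; [unfold qtri; simpl; ring |].
  replace (S n * (S n - 1))%nat with (n * (n - 1) + (n + n))%nat by (destruct n; simpl; lia).
  rewrite pow_add, IHn. unfold qtri; simpl prod_lt. rewrite pow_add. ring.
Qed.

Lemma qbinom_diag q N : 0 < q < 1 -> qbinom q N N = 1.
Proof. intros Hq. unfold qbinom. rewrite Nat.leb_refl, Nat.sub_diag. simpl. field. nonzero. Qed.

Lemma qbinom_0 q N : 0 < q < 1 -> qbinom q N 0 = 1.
Proof. intros Hq. unfold qbinom. simpl. rewrite Nat.sub_0_r. field. nonzero. Qed.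

Lemma qbinom_gt q N i : (N < i)%nat -> qbinom q N i = 0.
Proof. intros H. unfold qbinom. destruct (Nat.leb_spec i N); auto; lia. Qed.

Lemma qbinom_pos q N i : 0 < q < 1 -> (i <= N)%nat -> 0 < qbinom q N i.
Proof.
  intros Hq Hi. unfold qbinom. destruct (Nat.leb_spec i N); try lia.
  pose proof (qpoch_qq_pos q N Hq). pose proof (qpoch_qq_pos q i Hq).
  pose proof (qpoch_qq_pos q (N - i) Hq).
  apply Rdiv_lt_0_compat; nra.
Qed.

Lemma qbinom_sym q N i : (i <= N)%nat -> qbinom q N i = qbinom q N (N - i).
Proof.
  intros H. unfold qbinom.
  destruct (Nat.leb_spec i N), (Nat.leb_spec (N - i) N); try lia.
  replace (N - (N - i))%nat with i by lia. f_equal. ring.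
Qed.

Lemma qbinom_mul q m k j : 0 < q < 1 -> (j <= k <= m)%nat ->
  qbinom q m k * qbinom q k j = qbinom q m j * qbinom q (m - j) (k - j).
Proof.
  intros Hq H. unfold qbinom.
  destruct (Nat.leb_spec k m), (Nat.leb_spec j k), (Nat.leb_spec j m),
    (Nat.leb_spec (k - j) (m - j)); try lia.
  replace (m - j - (k - j))%nat with (m - k)%nat by lia.
  field. nonzero.
Qed.

Lemma qbinom_pascal q N i : 0 < q < 1 ->
  qbinom q (S N) (S i) = qbinom q N (S i) + q ^ (N - i) * qbinom q N i.
Proof.
  intros Hq. unfold qbinom.
  destruct (Nat.leb_spec (S i) (S N)), (Nat.leb_spec (S i) N), (Nat.leb_spec i N); try lia.
  - set (k := (N - S i)%nat).
    replace (S N - S i)%nat with (S k) by lia. replace (N - i)%nat with (S k) by lia.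
    replace N with (i + S k)%nat by lia.
    rewrite !qpoch_S, !pow_add. simpl. field. nonzero.
  - replace i with N by lia. rewrite !Nat.sub_diag. simpl. field. nonzero.
  - ring.
Qed.

(* Induction on N: split [1 - A B q^N] termwise as
   [(1 - B q^(N-i)) + q^(N-i) B (1 - A q^i)] and recombine with q-Pascal. *)
Lemma q_chu_vandermonde q A B N : 0 < q < 1 ->
  qpoch (A * B) q N =
  sum_lt (S N) (fun i => qbinom q N i * B ^ i * qpoch A q i * qpoch B q (N - i)).
Proof.
  intros Hq. induction N; [simpl; rewrite qbinom_diag; auto; ring |].
  set (T i := qbinom q N i * B ^ i * qpoch A q i * qpoch B q (N - i)).
  set (X i := B ^ i * qpoch A q i * qpoch B q (S N - i)).
  assert (Hfirst : X O + sum_lt (S N) (fun i => qbinom q N (S i) * X (S i)) =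
                   sum_lt (S N) (fun i => T i * (1 - B * q ^ (N - i)))).
  { transitivity (sum_lt (S (S N)) (fun i => qbinom q N i * X i)).
    - rewrite (sum_lt_Sl (S N)), qbinom_0; auto. ring.
    - rewrite (sum_lt_pad (S N)); [| lia | intros i Hi; rewrite qbinom_gt by lia; ring].
      apply sum_lt_ext; intros i Hi. unfold T, X.
      replace (S N - i)%nat with (S (N - i)) by lia. simpl. ring. }
  assert (Hsecond : sum_lt (S N) (fun i => q ^ (N - i) * qbinom q N i * X (S i)) =
                    sum_lt (S N) (fun i => T i * (q ^ (N - i) * B * (1 - A * q ^ i)))).
  { apply sum_lt_ext; intros i Hi. unfold T, X. simpl. ring. }
  transitivity (sum_lt (S N) (fun i => T i * (1 - B * q ^ (N - i)))
                + sum_lt (S N) (fun i => T i * (q ^ (N - i) * B * (1 - A * q ^ i)))).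
  - rewrite qpoch_S, IHN, <- sum_lt_plus, Rmult_comm, <- sum_lt_scal.
    apply sum_lt_ext; intros i Hi.
    replace (q ^ N) with (q ^ (N - i) * q ^ i) by (rewrite <- pow_add; f_equal; lia).
    fold (T i). ring.
  - rewrite <- Hfirst, <- Hsecond, (sum_lt_Sl (S N)), Rplus_assoc, <- sum_lt_plus.
    f_equal; [unfold X; rewrite qbinom_0; auto; ring |].
    apply sum_lt_ext; intros i Hi. rewrite qbinom_pascal by auto. unfold X. ring.
Qed.

Lemma q_chu_vandermonde_rev q A B N : 0 < q < 1 ->
  qpoch (A * B) q N =
  sum_lt (S N) (fun i => qbinom q N i * A ^ (N - i) * qpoch A q i * qpoch B q (N - i)).
Proof.
  intros Hq. rewrite Rmult_comm, q_chu_vandermonde, sum_lt_rev; auto.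
  apply sum_lt_ext; intros i Hi.
  replace (S N - 1 - i)%nat with (N - i)%nat by lia.
  replace (N - (N - i))%nat with i by lia.
  rewrite <- qbinom_sym by lia. ring.
Qed.

Lemma qbinom_qpoch_sum1 q B N : 0 < q < 1 ->
  sum_lt (S N) (fun i => qbinom q N i * B ^ i * qpoch B q (N - i)) = 1.
Proof.
  intros Hq. rewrite <- (qpoch_0 q N), <- (Rmult_0_l B), q_chu_vandermonde; auto.
  apply sum_lt_ext; intros. rewrite qpoch_0. ring.
Qed.

Lemma qbinom_qpoch_sum1_rev q A N : 0 < q < 1 ->
  sum_lt (S N) (fun i => qbinom q N i * A ^ (N - i) * qpoch A q i) = 1.
Proof.
  intros Hq. rewrite <- (qpoch_0 q N), <- (Rmult_0_r A), q_chu_vandermonde_rev; auto.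
  apply sum_lt_ext; intros. rewrite qpoch_0. ring.
Qed.

(** * q-Charlier and Wall polynomials *)

Definition qfalling (q : R) (l : nat) (w : R) : R := prod_lt l (fun i => w - q ^ i).

Lemma qfalling_qpoch q l w : w <> 0 -> qfalling q l w = w ^ l * qpoch (/ w) q l.
Proof.
  intros Hw. unfold qfalling. rewrite qpoch_prod, <- prod_lt_const, <- prod_lt_mult.
  apply prod_lt_ext; intros. field; auto.
Qed.

Lemma qfalling_qpow_eq0 q l j : (j < l)%nat -> qfalling q l (q ^ j) = 0.
Proof.
  intros H. unfold qfalling. replace l with (S j + (l - S j))%nat by lia.
  rewrite prod_lt_add. simpl. ring.
Qed.

Lemma qpoch_inv_qpow q n k : 0 < q < 1 -> (k <= n)%nat ->
  qpoch (/ q ^ n) q k * qpoch q q (n - k) = (-1) ^ k * qtri q k * (/ q ^ n) ^ k * qpoch q q n.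
Proof.
  intros Hq. induction k; intros H; [unfold qtri; simpl; rewrite Nat.sub_0_r; ring |].
  assert (E : (n - k = S (n - S k))%nat) by lia.
  apply (Rmult_eq_reg_r (1 - q * q ^ (n - S k))); [| nonzero].
  transitivity (qpoch (/ q ^ n) q k * qpoch q q (n - k) * (1 - / q ^ n * q ^ k)).
  { rewrite E. simpl. ring. }
  rewrite IHk by lia.
  assert (Hn : q ^ n = q ^ k * q * q ^ (n - S k)).
  { replace n with (k + S (n - S k))%nat at 1 by lia. rewrite pow_add. simpl. ring. }
  rewrite Hn. unfold qtri. simpl. field. nonzero.
Qed.

Lemma qfalling_qpow q l j : 0 < q < 1 -> (l <= j)%nat ->
  qfalling q l (q ^ j) * qpoch q q (j - l) = (-1) ^ l * qtri q l * qpoch q q j.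
Proof.
  intros Hq H. rewrite qfalling_qpoch by nonzero.
  rewrite Rmult_assoc, qpoch_inv_qpow, pow_inv by auto. field. nonzero.
Qed.

Lemma q_newton q k w : 0 < q < 1 -> w <> 0 ->
  w ^ k = sum_lt (S k) (fun l => qbinom q k l * qfalling q l w).
Proof.
  intros Hq Hw.
  rewrite <- (Rmult_1_r (w ^ k)), <- (qbinom_qpoch_sum1_rev q (/ w) k Hq), <- sum_lt_scal.
  apply sum_lt_ext; intros i Hi. rewrite qfalling_qpoch by auto.
  replace (w ^ k) with (w ^ i * w ^ (k - i)) by (rewrite <- pow_add; f_equal; lia).
  rewrite pow_inv. field. nonzero.
Qed.

Definition charlier (q a : R) (m j : nat) : R :=
  sum_lt (S m) (fun l => qbinom q m l * a ^ l * qfalling q l (q ^ j)).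

Definition charlier_coef (q a : R) (m k : nat) : R := qbinom q m k * qpoch a q (m - k) * a ^ k.

Lemma charlier_expand q a m j : 0 < q < 1 ->
  charlier q a m j = sum_lt (S m) (fun k => charlier_coef q a m k * (q ^ k) ^ j).
Proof.
  intros Hq. unfold charlier, charlier_coef.
  set (g l k := qbinom q m k * qpoch a q (m - k) * a ^ k * (qbinom q k l * qfalling q l (q ^ j))).
  transitivity (sum_lt (S m) (fun k => sum_lt (S k) (fun l => g l k))).
  2: { apply sum_lt_ext; intros k Hk.
       rewrite <- pow_mult, Nat.mul_comm, pow_mult, (q_newton q k (q ^ j)), <- sum_lt_scal
         by nonzero.
       reflexivity. }
  rewrite sum_lt_triangle. apply sum_lt_ext; intros l Hl.
  transitivity (qbinom q m l * a ^ l * qfalling q l (q ^ j) *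
     sum_lt (S (m - l)) (fun i => qbinom q (m - l) i * a ^ i * qpoch a q (m - l - i))).
  { rewrite qbinom_qpoch_sum1 by auto. ring. }
  rewrite <- sum_lt_scal. replace (S m - l)%nat with (S (m - l)) by lia.
  apply sum_lt_ext; intros i Hi. unfold g.
  replace (m - (l + i))%nat with (m - l - i)%nat by lia.
  assert (Hb : qbinom q m (l + i) * qbinom q (l + i) l = qbinom q m l * qbinom q (m - l) i).
  { rewrite qbinom_mul by (auto; lia). do 2 f_equal. lia. }
  rewrite pow_add. symmetry.
  transitivity (qbinom q m (l + i) * qbinom q (l + i) l * qpoch a q (m - l - i)
                * a ^ l * a ^ i * qfalling q l (q ^ j)); [ring |].
  rewrite Hb. ring.
Qed.

Lemma qbinom_qfalling_sym q m j l : 0 < q < 1 ->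
  qbinom q m l * qfalling q l (q ^ j) = qbinom q j l * qfalling q l (q ^ m).
Proof.
  intros Hq. destruct (Nat.leb_spec l m) as [Hm|Hm].
  2: { rewrite (qbinom_gt q m l), (qfalling_qpow_eq0 q l m) by auto. ring. }
  destruct (Nat.leb_spec l j) as [Hj|Hj].
  2: { rewrite (qbinom_gt q j l), (qfalling_qpow_eq0 q l j) by auto. ring. }
  apply (Rmult_eq_reg_r (qpoch q q (j - l) * qpoch q q (m - l))); [| nonzero].
  transitivity (qbinom q m l * qpoch q q (m - l) * (qfalling q l (q ^ j) * qpoch q q (j - l)));
    [ring |].
  transitivity (qbinom q j l * qpoch q q (j - l) * (qfalling q l (q ^ m) * qpoch q q (m - l)));
    [| ring].
  rewrite !qfalling_qpow by auto. unfold qbinom.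
  destruct (Nat.leb_spec l m), (Nat.leb_spec l j); try lia.
  field. nonzero.
Qed.

Lemma charlier_sym q a m j : 0 < q < 1 -> charlier q a m j = charlier q a j m.
Proof.
  intros Hq. unfold charlier.
  rewrite <- (sum_lt_pad (S m) (S (Nat.max m j))), <- (sum_lt_pad (S j) (S (Nat.max m j)));
    try lia; try (intros i Hi; rewrite qbinom_gt by lia; ring).
  apply sum_lt_ext; intros l Hl.
  transitivity (a ^ l * (qbinom q m l * qfalling q l (q ^ j))); [ring |].
  rewrite qbinom_qfalling_sym by auto. ring.
Qed.

Lemma wall_term_charlier q x n d k : 0 < q < 1 -> x <> 0 -> (k <= n)%nat ->
  qpoch q q (n + d) / qpoch q q d *
    (qpoch (/ q ^ n) q k / qpoch (q ^ d * q) q k * (q * x) ^ k / qpoch q q k) =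
  (-1) ^ n * x ^ n / qtri q n *
    (qbinom q n (n - k) * (/ x) ^ (n - k) * qfalling q (n - k) (q ^ (n + d))).
Proof.
  intros Hq Hx Hk.
  assert (Hd : qpoch (q ^ d * q) q k = qpoch q q (d + k) / qpoch q q d).
  { rewrite qpoch_add, (Rmult_comm q). field. nonzero. }
  assert (Hinv : qpoch (/ q ^ n) q k =
                 (-1) ^ k * qtri q k * (/ q ^ n) ^ k * qpoch q q n / qpoch q q (n - k)).
  { rewrite <- qpoch_inv_qpow by auto. field. nonzero. }
  assert (Hfall : qfalling q (n - k) (q ^ (n + d)) =
                  (-1) ^ (n - k) * qtri q (n - k) * qpoch q q (n + d) / qpoch q q (d + k)).
  { replace (d + k)%nat with (n + d - (n - k))%nat by lia.
    rewrite <- qfalling_qpow by (assumption || lia). field. nonzero. }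
  assert (Hbin : qbinom q n (n - k) = qpoch q q n / (qpoch q q (n - k) * qpoch q q k)).
  { unfold qbinom. destruct (Nat.leb_spec (n - k) n); try lia.
    replace (n - (n - k))%nat with k by lia. reflexivity. }
  assert (Hqn : (/ q ^ n) ^ k = / (qtri q k * qtri q k * q ^ k * q ^ ((n - k) * k))).
  { rewrite pow_inv, <- pow_mult, qtri_sqr_pow, <- pow_add. do 2 f_equal. nia. }
  assert (Hqt : qtri q n = qtri q (n - k) * qtri q k * q ^ ((n - k) * k)).
  { rewrite <- qtri_add. f_equal. lia. }
  assert (Hxn : x ^ n = x ^ k * x ^ (n - k)) by (rewrite <- pow_add; f_equal; lia).
  assert (Hsign : (-1) ^ n = (-1) ^ k / (-1) ^ (n - k)).
  { apply (Rmult_eq_reg_r ((-1) ^ (n - k))); [| nonzero].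
    replace n with (k + (n - k))%nat at 1 by lia.
    rewrite pow_add, Rmult_assoc, sign_sqr. field. nonzero. }
  assert (qpoch q q (d + k) <> 0) by nonzero.
  rewrite Hd, Hinv, Hfall, Hbin, Hqn, Hqt, Hxn, Hsign, pow_inv, Rpow_mult_distr.
  field. nonzero.
Qed.

Lemma wall_charlier q x n d : 0 < q < 1 -> x <> 0 ->
  qpoch q q (n + d) / qpoch q q d * wall n x (q ^ d) q =
  (-1) ^ n * x ^ n / qtri q n * charlier q (/ x) n (n + d).
Proof.
  intros Hq Hx. unfold wall, charlier.
  rewrite sum_f_R0_sum_lt.
  rewrite (sum_lt_rev (S n) (fun l => qbinom q n l * (/ x) ^ l * qfalling q l (q ^ (n + d)))).
  rewrite <- !sum_lt_scal.
  apply sum_lt_ext; intros k Hk.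
  replace (S n - 1 - k)%nat with (n - k)%nat by lia.
  apply wall_term_charlier; auto; lia.
Qed.

Lemma pj_charlier q m lam j : 0 < q < 1 -> 0 < lam -> Nqm q m lam <> 0 ->
  let x := (1 - q) * lam in
  pj lam q m j = x ^ m / (Nqm q m lam * qpoch q q m) * (x / q ^ m) ^ j
                 * sum_lt (S m) (fun k => charlier_coef q (/ x) m k * (q ^ k) ^ j) ^ 2
                 / qpoch q q j.
Proof.
  intros Hq Hl HN x. unfold pj. cbv zeta.
  assert (Hx : 0 < x) by (unfold x; nra).
  set (mn := Nat.min m j). set (mx := Nat.max m j). set (d := (mx - mn)%nat). fold x.
  assert (Hwall : qpoch q q mx / qpoch q q d * wall mn x (q ^ d) q =
                  (-1) ^ mn * x ^ mn / qtri q mn * charlier q (/ x) m j).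
  { replace mx with (mn + d)%nat at 1 by lia. rewrite wall_charlier by nonzero.
    replace (mn + d)%nat with mx by lia.
    unfold mn, mx. destruct (Nat.le_ge_cases m j).
    - rewrite Nat.min_l, Nat.max_r by auto. reflexivity.
    - rewrite Nat.min_r, Nat.max_l, charlier_sym by auto. reflexivity. }
  assert (Hxp : x ^ d * (x ^ mn * x ^ mn) = x ^ m * x ^ j) by (rewrite <- !pow_add; f_equal; lia).
  rewrite Hwall, pow_qtri_sqr, <- charlier_expand by auto.
  transitivity (((1 - q) ^ d * lam ^ d * (x ^ mn * x ^ mn)) * ((-1) ^ mn * (-1) ^ mn)
     * charlier q (/ x) m j ^ 2 / (Nqm q m lam * q ^ (m * j) * qpoch q q j * qpoch q q m)).
  { field. nonzero. }
  rewrite <- Rpow_mult_distr. fold x. rewrite Hxp, sign_sqr, pow_mult.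
  unfold Rdiv. rewrite Rpow_mult_distr, pow_inv.
  field. nonzero.
Qed.

(** * Euler's q-exponential *)

Definition qexp (q z : R) : R := PSeries (fun n => / qpoch q q n) z.

Lemma qexp_radius q : 0 < q < 1 -> CV_radius (fun n => / qpoch q q n) = 1.
Proof.
  intros Hq. rewrite <- Rinv_1. apply CV_radius_finite_DAlembert; try lra.
  - intros n. nonzero.
  - assert (Hlim : is_lim_seq (fun n => 1 - q * q ^ n) 1).
    { rewrite <- (Rminus_0_r 1), <- (Rmult_0_r q) at 1.
      apply is_lim_seq_minus', is_lim_seq_mult', is_lim_seq_geom; try apply is_lim_seq_const.
      rewrite Rabs_pos_eq; lra. }
    apply (is_lim_seq_ext (fun n => / (1 - q * q ^ n))).
    + intros n. simpl. pose proof (pow_pos_le1 q n Hq). pose proof (qpoch_qq_pos q n Hq).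
      rewrite Rabs_pos_eq; [field; nonzero |].
      replace (/ (qpoch q q n * (1 - q * q ^ n)) / / qpoch q q n) with (/ (1 - q * q ^ n))
        by (field; nonzero).
      apply Rlt_le, Rinv_0_lt_compat. nra.
    + assert (Hinv : Finite 1 <> 0) by (intro H; injection H; lra).
      generalize (is_lim_seq_inv _ 1 Hlim Hinv). simpl. rewrite Rinv_1. auto.
Qed.

Lemma qexp_is_series q z : 0 < q < 1 -> Rabs z < 1 ->
  is_series (fun n => / qpoch q q n * z ^ n) (qexp q z).
Proof.
  intros Hq Hz. apply Series_correct, ex_series_Rabs, CV_disk_inside.
  rewrite qexp_radius; auto.
Qed.

Lemma qexp_qz q z : 0 < q < 1 -> Rabs z < 1 -> qexp q (q * z) = (1 - z) * qexp q z.
Proof.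
  intros Hq Hz.
  assert (Hqz : Rabs (q * z) < 1).
  { rewrite Rabs_mult, Rabs_pos_eq by lra. pose proof (Rabs_pos z). nra. }
  assert (Hz1 := qexp_is_series q z Hq Hz).
  assert (Hdiff := is_series_minus _ _ _ _ Hz1 (qexp_is_series q (q * z) Hq Hqz)).
  assert (Hshift : is_series (fun n => / qpoch q q n * z ^ n - / qpoch q q n * (q * z) ^ n)
                             (z * qexp q z)).
  { apply is_series_decr_1. simpl. unfold plus, opp; simpl.
    replace (z * qexp q z + - (/ 1 * 1 - / 1 * 1)) with (z * qexp q z) by field.
    eapply is_series_ext; [| apply (is_series_scal_l z _ _ Hz1)].
    intros n. unfold scal; simpl. unfold mult; simpl.
    rewrite Rpow_mult_distr. field. nonzero. }
  apply is_series_unique in Hdiff. apply is_series_unique in Hshift.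
  change (Series (fun n => / qpoch q q n * z ^ n - / qpoch q q n * (q * z) ^ n)
          = qexp q z - qexp q (q * z)) in Hdiff.
  lra.
Qed.

Lemma qexp_qpowz q z N : 0 < q < 1 -> Rabs z < 1 -> qexp q (q ^ N * z) = qpoch z q N * qexp q z.
Proof.
  intros Hq Hz. induction N; [simpl; rewrite Rmult_1_l; ring |].
  assert (HN : Rabs (q ^ N * z) < 1).
  { pose proof (pow_pos_le1 q N Hq). pose proof (Rabs_pos z).
    rewrite Rabs_mult, Rabs_pos_eq; nra. }
  replace (q ^ S N * z) with (q * (q ^ N * z)) by (simpl; ring).
  rewrite qexp_qz, IHN by auto. simpl. ring.
Qed.

(* Euler: (z; q)_N * qexp q z = qexp q (q^N z) tends to qexp q 0 = 1,
   so qexp q z = 1 / (z; q)_oo. *)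
Lemma qpoch_qexp_lim q z : 0 < q < 1 -> Rabs z < 1 ->
  is_lim_seq (fun N => qpoch z q N * qexp q z) 1.
Proof.
  intros Hq Hz. apply (is_lim_seq_ext (fun N => qexp q (q ^ N * z))).
  { intros N. apply qexp_qpowz; auto. }
  replace 1 with (qexp q 0) by (unfold qexp; rewrite PSeries_0; simpl; field).
  apply is_lim_seq_continuous.
  - apply PSeries_continuity. rewrite qexp_radius by auto. simpl. rewrite Rabs_R0. lra.
  - rewrite <- (Rmult_0_l z). apply is_lim_seq_mult'; [| apply is_lim_seq_const].
    apply is_lim_seq_geom. rewrite Rabs_pos_eq; lra.
Qed.

Lemma qexp_neq0 q z : 0 < q < 1 -> Rabs z < 1 -> qexp q z <> 0.
Proof.
  intros Hq Hz H. assert (Hlim := qpoch_qexp_lim q z Hq Hz). rewrite H in Hlim.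
  apply is_lim_seq_unique in Hlim.
  rewrite (Lim_seq_ext _ (fun _ => 0)), Lim_seq_const in Hlim by (intros; ring).
  injection Hlim. lra.
Qed.

#[local] Hint Resolve qexp_neq0 : nonzero.

Lemma qpoch_inf_qexp q z : 0 < q < 1 -> Rabs z < 1 -> qpoch_inf z q = / qexp q z.
Proof.
  intros Hq Hz. unfold qpoch_inf.
  assert (Hnz := qexp_neq0 q z Hq Hz).
  assert (Hlim := is_lim_seq_scal_r _ (/ qexp q z) _ (qpoch_qexp_lim q z Hq Hz)).
  rewrite (is_lim_seq_unique _ (/ qexp q z)); [reflexivity |].
  eapply is_lim_seq_ext; [| simpl in Hlim; rewrite Rmult_1_l in Hlim; exact Hlim].
  intros N. simpl. field. auto.
Qed.

(** * A terminating 3phi2 as a double sum *)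

Definition qfallingS (q t : R) (n : nat) : R := prod_lt n (fun r => t - q ^ S r).

Lemma qfallingS_qpoch q t n : t <> 0 -> qfallingS q t n = t ^ n * qpoch (q / t) q n.
Proof.
  intros Ht. unfold qfallingS. rewrite qpoch_prod, <- prod_lt_const, <- prod_lt_mult.
  apply prod_lt_ext; intros. simpl. field. auto.
Qed.

Lemma qpoch_reverse q z n : 0 < q -> z <> 0 ->
  qpoch z q n = (- z) ^ n * qtri q n * qpoch (q / (z * q ^ n)) q n.
Proof.
  intros Hq Hz. rewrite !qpoch_prod, (prod_lt_rev n (fun i => 1 - q / (z * q ^ n) * q ^ i)).
  unfold qtri. rewrite <- prod_lt_const, <- !prod_lt_mult.
  apply prod_lt_ext; intros i Hi.
  replace (q ^ n) with (q ^ (n - 1 - i) * q ^ i * q ^ 1) by (rewrite <- !pow_add; f_equal; lia).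
  field. nonzero.
Qed.

Lemma qpoch_mult_expand q t c k : 0 < q < 1 -> t <> 0 -> c <> 0 ->
  qpoch (t * c) q k =
  sum_lt (S k) (fun j => qbinom q k j * (-1) ^ j * qtri q j * c ^ j
                         * qpoch (q ^ S j * c) q (k - j) * qfallingS q t j).
Proof.
  intros Hq Ht Hc.
  rewrite qpoch_reverse by nonzero.
  replace (q / (t * c * q ^ k)) with (q / t * / (c * q ^ k)) by (field; nonzero).
  rewrite q_chu_vandermonde_rev, <- sum_lt_scal by auto.
  apply sum_lt_ext; intros j Hj.
  assert (Hsplit : forall y, y ^ k = y ^ j * y ^ (k - j))
    by (intros; rewrite <- pow_add; f_equal; lia).
  assert (Hrev : qpoch (q ^ S j * c) q (k - j) =
                 (- (q ^ S j * c)) ^ (k - j) * qtri q (k - j) * qpoch (/ (c * q ^ k)) q (k - j)).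
  { rewrite qpoch_reverse by nonzero. do 2 f_equal.
    rewrite (Hsplit q). simpl. field. nonzero. }
  assert (Htri : qtri q k = qtri q j * qtri q (k - j) * (q ^ j) ^ (k - j)).
  { rewrite <- pow_mult, <- qtri_add. f_equal. lia. }
  rewrite Hrev, qfallingS_qpoch, Htri by auto.
  replace (- (t * c)) with (-1 * t * c) by ring.
  replace (- (q ^ S j * c)) with (-1 * q * c * q ^ j) by (simpl; ring).
  unfold Rdiv. rewrite !Rpow_mult_distr, !(Hsplit (-1)), !(Hsplit t), !(Hsplit c), pow_inv.
  field. nonzero.
Qed.

Lemma qtri_sqr_pow_split q m k : (k <= m)%nat ->
  qtri q k * qtri q k * q ^ k * (q ^ k) ^ (m - k) = (q ^ m) ^ k.
Proof. intros Hk. rewrite qtri_sqr_pow, pow_mult, <- pow_add, <- !pow_mult. f_equal. nia. Qed.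

Lemma qpoch_reverse_split q a m k : 0 < q < 1 -> a <> 0 -> (k <= m)%nat ->
  qpoch a q (m - k) * a ^ k * qpoch (q / (a * q ^ m)) q k =
  qpoch a q m * (-1) ^ k * qtri q k * q ^ k / (q ^ m) ^ k.
Proof.
  intros Hq Ha Hk.
  replace (qpoch a q m) with (qpoch a q (m - k) * qpoch (a * q ^ (m - k)) q k)
    by (rewrite <- qpoch_add; f_equal; lia).
  rewrite (qpoch_reverse q (a * q ^ (m - k)) k) by nonzero.
  replace (a * q ^ (m - k) * q ^ k) with (a * q ^ m)
    by (rewrite Rmult_assoc, <- pow_add; do 2 f_equal; lia).
  replace (- (a * q ^ (m - k))) with (-1 * a * q ^ (m - k)) by ring.
  rewrite <- (qtri_sqr_pow_split q m k), !Rpow_mult_distr, <- pow_mult, Nat.mul_comm, pow_mult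
    by auto.
  transitivity (qpoch a q (m - k) * a ^ k * qpoch (q / (a * q ^ m)) q k * ((-1) ^ k * (-1) ^ k));
    [rewrite sign_sqr; ring | field; nonzero].
Qed.

Lemma qpoch_div_qpow q t m k : 0 < q < 1 -> t <> 0 -> (k <= m)%nat ->
  (-1) ^ m * q ^ m * qtri q m * qpoch (t * q ^ k / q ^ m) q m =
  (-1) ^ k * qtri q k * q ^ k * (q ^ k) ^ (m - k) * qpoch t q k * qfallingS q t (m - k).
Proof.
  intros Hq Ht Hk. destruct (Nat.le_exists_sub k m Hk) as [n [-> _]]. rewrite Nat.add_sub.
  replace (t * q ^ k / q ^ (n + k)) with (t / q ^ n) by (rewrite pow_add; field; nonzero).
  assert (Hsplit : qpoch (t / q ^ n) q (n + k) = qpoch (t / q ^ n) q n * qpoch t q k).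
  { rewrite qpoch_add. do 2 f_equal. field. nonzero. }
  assert (Hrev : qpoch (t / q ^ n) q n = (-1) ^ n * qfallingS q t n * qtri q n / (q ^ n) ^ n).
  { rewrite qpoch_reverse, qfallingS_qpoch by nonzero.
    replace (q / (t / q ^ n * q ^ n)) with (q / t) by (field; nonzero).
    replace (- (t / q ^ n)) with (-1 * t * / q ^ n) by (field; nonzero).
    rewrite !Rpow_mult_distr, pow_inv. field. nonzero. }
  rewrite Hsplit, Hrev, qtri_add, !pow_add, <- pow_mult, <- qtri_sqr_pow.
  replace (q ^ (n * k)) with ((q ^ k) ^ n) by (rewrite <- pow_mult; f_equal; lia).
  transitivity ((-1) ^ k * ((-1) ^ n * (-1) ^ n) * qtri q k * q ^ k * (q ^ k) ^ n
                * qpoch t q k * qfallingS q t n); [field; nonzero | rewrite sign_sqr; ring].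
Qed.

Lemma q_chu_vandermonde_fallingS q t j N : 0 < q < 1 -> t <> 0 ->
  sum_lt (S N) (fun i => qbinom q N i * q ^ i * qpoch (t * q ^ j) q i * qfallingS q t (N - i)) =
  t ^ N * qpoch (q * q ^ j) q N.
Proof.
  intros Hq Ht.
  replace (q * q ^ j) with (t * q ^ j * (q / t)) by (field; auto).
  rewrite q_chu_vandermonde, <- sum_lt_scal by auto.
  apply sum_lt_ext; intros i Hi. rewrite qfallingS_qpoch by auto.
  replace (t ^ N) with (t ^ i * t ^ (N - i)) by (rewrite <- pow_add; f_equal; lia).
  unfold Rdiv. rewrite Rpow_mult_distr, pow_inv. field. nonzero.
Qed.

Lemma div_qpow_in_01 q m x : 0 < q -> 0 < x < q ^ m -> 0 < x / q ^ m < 1.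
Proof. intros Hq Hx. split; [apply Rdiv_lt_0_compat | apply -> Rdiv_lt_1]; nonzero. Qed.

Lemma qpoch_qc_pos q c j : 0 < q < 1 -> 0 < c < 1 -> 0 < qpoch (q * c) q j.
Proof.
  intros Hq Hc. induction j; simpl; [lra |].
  pose proof (pow_pos_le1 q j Hq). assert (q * c < 1) by nra.
  apply Rmult_lt_0_compat; nra.
Qed.

Section FiniteIdentity.

Variables (q x t : R) (m : nat).
Hypotheses (Hq : 0 < q < 1) (Hx : 0 < x < q ^ m) (Ht : t <> 0).

Local Notation a := (/ x).
Local Notation c := (x / q ^ m).

Let qpoch_qc_neq0 j : qpoch (q * c) q j <> 0.
Proof. apply Rgt_not_eq, qpoch_qc_pos, div_qpow_in_01; lra. Qed.

#[local] Hint Resolve qpoch_qc_neq0 : nonzero.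

Lemma charlier_coef_eq k : (k <= m)%nat ->
  charlier_coef q a m k = qbinom q m k * qpoch a q m * (-1) ^ k * qtri q k * q ^ k
                  / ((q ^ m) ^ k * qpoch (q * c) q k).
Proof.
  intros Hk. unfold charlier_coef.
  apply (Rmult_eq_reg_r (qpoch (q * c) q k)); [| nonzero].
  replace (q * c) with (q / (a * q ^ m)) at 1 by (field; nonzero).
  transitivity (qbinom q m k * (qpoch a q (m - k) * a ^ k * qpoch (q / (a * q ^ m)) q k)); [ring |].
  rewrite qpoch_reverse_split by nonzero. field. nonzero.
Qed.

Lemma qpoch_inv_neq0 : qpoch a q m <> 0.
Proof.
  intros H0. apply (pow_nonzero a m); [nonzero |].
  transitivity (charlier_coef q a m m).
  - unfold charlier_coef. rewrite qbinom_diag, Nat.sub_diag by auto. simpl. ring.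
  - rewrite charlier_coef_eq, H0 by lia. unfold Rdiv. ring.
Qed.

#[local] Hint Resolve qpoch_inv_neq0 : nonzero.

(* By qpoch_div_qpow, [shift_term k] is (t q^(k-m); q)_m up to a factor independent of k. *)
Let shift_term k :=
  (-1) ^ k * qtri q k * q ^ k * (q ^ k) ^ (m - k) * qpoch t q k * qfallingS q t (m - k).

Let phi_term j :=
  charlier_coef q a m j * qfallingS q t j * t ^ (m - j) * qpoch t q j * x ^ j / qpoch q q j.

Lemma phi32_term_charlier_coef k : (k <= m)%nat ->
  t ^ m * phi32_term (/ q ^ m) (q / t) t (q * c) q q (q * x) k = phi_term k / qpoch a q m.
Proof.
  intros Hk. unfold phi32_term, phi_term.
  assert (Hinv : qpoch (/ q ^ m) q k =
                 (-1) ^ k * qtri q k * (/ q ^ m) ^ k * qpoch q q m / qpoch q q (m - k)).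
  { rewrite <- qpoch_inv_qpow by auto. field. nonzero. }
  rewrite charlier_coef_eq, Hinv, qfallingS_qpoch by auto. unfold qbinom.
  destruct (Nat.leb_spec k m); try lia.
  replace (t ^ m) with (t ^ k * t ^ (m - k)) by (rewrite <- pow_add; f_equal; lia).
  rewrite pow_inv, Rpow_mult_distr. field. nonzero.
Qed.

Lemma charlier_coef_triangle_term j i : (j + i <= m)%nat ->
  charlier_coef q a m (j + i) * shift_term (j + i)
  * (qbinom q (j + i) j * (-1) ^ j * qtri q j * c ^ j * qpoch (q ^ S j * c) q (j + i - j)
     * qfallingS q t j)
  = qbinom q m j * qpoch a q m * (-1) ^ j * qtri q j * c ^ j * qfallingS q t j * q ^ j
    * qpoch t q j / qpoch (q * c) q j
    * (qbinom q (m - j) i * q ^ i * qpoch (t * q ^ j) q i * qfallingS q t (m - j - i)).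
Proof.
  intros Hji. unfold shift_term.
  replace (j + i - j)%nat with i by lia. replace (m - j - i)%nat with (m - (j + i))%nat by lia.
  assert (Hpoch : qpoch (q ^ S j * c) q i = qpoch (q * c) q (j + i) / qpoch (q * c) q j).
  { rewrite qpoch_add. replace (q * c * q ^ j) with (q ^ S j * c) by (simpl; ring).
    field. nonzero. }
  assert (Hbin : qbinom q (m - j) i = qbinom q m (j + i) * qbinom q (j + i) j / qbinom q m j).
  { rewrite qbinom_mul by (auto; lia). replace (j + i - j)%nat with i by lia.
    field. apply Rgt_not_eq, qbinom_pos; auto; lia. }
  assert (qbinom q m j <> 0) by (apply Rgt_not_eq, qbinom_pos; auto; lia).
  rewrite charlier_coef_eq, Hpoch, Hbin, <- (qtri_sqr_pow_split q m (j + i)), (qpoch_add t)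
    by (auto; lia).
  replace (q ^ (j + i)) with (q ^ j * q ^ i) by (symmetry; apply pow_add).
  transitivity (qbinom q m j * qpoch a q m * (-1) ^ j * qtri q j * c ^ j * qfallingS q t j * q ^ j
    * qpoch t q j / qpoch (q * c) q j
    * (qbinom q m (j + i) * qbinom q (j + i) j / qbinom q m j * q ^ i * qpoch (t * q ^ j) q i
       * qfallingS q t (m - (j + i))) * ((-1) ^ (j + i) * (-1) ^ (j + i)));
    [field; nonzero | rewrite sign_sqr; ring].
Qed.

(* Expand (t c; q)_k by qpoch_mult_expand, exchange the two sums, and resum the
   inner one with q_chu_vandermonde_fallingS. *)
Lemma charlier_coef_sum_transform :
  qpoch q q m * sum_lt (S m) phi_term =
  sum_lt (S m) (fun k => charlier_coef q a m k * qpoch (t * c) q k * shift_term k).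
Proof.
  set (g j k := charlier_coef q a m k * shift_term k
        * (qbinom q k j * (-1) ^ j * qtri q j * c ^ j * qpoch (q ^ S j * c) q (k - j)
           * qfallingS q t j)).
  transitivity (sum_lt (S m) (fun k => sum_lt (S k) (fun j => g j k))).
  2: { apply sum_lt_ext; intros k Hk. unfold g. rewrite sum_lt_scal, qpoch_mult_expand by nonzero.
       ring. }
  rewrite sum_lt_triangle, <- sum_lt_scal. apply sum_lt_ext; intros j Hj.
  replace (S m - j)%nat with (S (m - j)) by lia.
  rewrite (sum_lt_ext _ _ (fun i =>
    qbinom q m j * qpoch a q m * (-1) ^ j * qtri q j * c ^ j * qfallingS q t j * q ^ j
    * qpoch t q j / qpoch (q * c) q j
    * (qbinom q (m - j) i * q ^ i * qpoch (t * q ^ j) q i * qfallingS q t (m - j - i))))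
    by (intros i Hi; apply charlier_coef_triangle_term; lia).
  rewrite sum_lt_scal, q_chu_vandermonde_fallingS by auto.
  replace (qpoch q q m) with (qpoch q q j * qpoch (q * q ^ j) q (m - j))
    by (rewrite <- qpoch_add; f_equal; lia).
  unfold phi_term. rewrite charlier_coef_eq by lia. unfold Rdiv. rewrite !Rpow_mult_distr, pow_inv.
  field. nonzero.
Qed.

Lemma charlier_coef_qpoch_sum k : (k <= m)%nat ->
  sum_lt (S m) (fun k' =>
    charlier_coef q a m k * charlier_coef q a m k' * qpoch (t * c) q (k + k')) =
  charlier_coef q a m k * qpoch (t * c) q k * shift_term k / ((-1) ^ m * q ^ m * qtri q m).
Proof.
  intros Hk. unfold shift_term. rewrite <- qpoch_div_qpow by auto.
  replace (t * q ^ k / q ^ m) with (t * c * q ^ k * a) by (field; nonzero).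
  rewrite (q_chu_vandermonde q (t * c * q ^ k) a m Hq).
  transitivity (charlier_coef q a m k * qpoch (t * c) q k * sum_lt (S m) (fun i =>
    qbinom q m i * a ^ i * qpoch (t * c * q ^ k) q i * qpoch a q (m - i))); [| field; nonzero].
  rewrite <- sum_lt_scal. apply sum_lt_ext; intros i Hi.
  rewrite qpoch_add. unfold charlier_coef. ring.
Qed.

Lemma phi32_sum_charlier_coef :
  sum_lt (S m) (phi32_term (/ q ^ m) (q / t) t (q * c) q q (q * x)) =
  / t ^ m * (x ^ m * q ^ m / (qpoch (q * c) q m * qpoch q q m) *
  sum_lt (S m) (fun k => sum_lt (S m) (fun k' =>
    charlier_coef q a m k * charlier_coef q a m k' * qpoch (t * c) q (k + k')))).
Proof.
  apply (Rmult_eq_reg_l (t ^ m)); [| nonzero].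
  rewrite <- Rmult_assoc, Rinv_r, Rmult_1_l by nonzero.
  assert (Hqcm : qpoch (q * c) q m =
                 qpoch a q m * (-1) ^ m * qtri q m * q ^ m * x ^ m / (q ^ m) ^ m).
  { apply (Rmult_eq_reg_l (charlier_coef q a m m)).
    - rewrite charlier_coef_eq at 1 by lia. unfold charlier_coef.
      rewrite qbinom_diag, Nat.sub_diag, pow_inv by auto.
      simpl. field. nonzero.
    - unfold charlier_coef. rewrite qbinom_diag, Nat.sub_diag by auto. simpl. nonzero. }
  rewrite <- sum_lt_scal, (sum_lt_ext _ _ (fun k => / qpoch a q m * phi_term k))
    by (intros k Hk; rewrite phi32_term_charlier_coef by lia; field; nonzero).
  rewrite (sum_lt_ext (S m) (fun k => sum_lt (S m) (fun k' =>
      charlier_coef q a m k * charlier_coef q a m k' * qpoch (t * c) q (k + k')))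
    (fun k => / ((-1) ^ m * q ^ m * qtri q m) *
              (charlier_coef q a m k * qpoch (t * c) q k * shift_term k)))
    by (intros k Hk; rewrite charlier_coef_qpoch_sum by lia; field; nonzero).
  rewrite !sum_lt_scal, <- charlier_coef_sum_transform, Hqcm, <- pow_mult, <- qtri_sqr_pow.
  transitivity (/ qpoch a q m * (qpoch q q m * sum_lt (S m) phi_term)
                / ((-1) ^ m * (-1) ^ m) / qpoch q q m);
    [rewrite sign_sqr; field; nonzero | field; nonzero].
Qed.

End FiniteIdentity.

(** * The generating function *)

Lemma is_series_finite a m : (forall k, (m < k)%nat -> a k = 0) -> is_series a (sum_lt (S m) a).
Proof.
  intros Ha. change (is_lim_seq (sum_n a) (sum_lt (S m) a)).
  apply (is_lim_seq_ext_loc (fun _ => sum_lt (S m) a)); [| apply is_lim_seq_const].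
  exists m; intros n Hn. rewrite sum_n_sum_lt.
  symmetry. apply sum_lt_pad; [lia |]. intros i Hi. apply Ha. lia.
Qed.

Lemma is_series_eq (a : nat -> R) (l l' : R) : is_series a l -> l = l' -> is_series a l'.
Proof. intros H <-. exact H. Qed.

Lemma is_series_sum_lt n (g : nat -> nat -> R) (l : nat -> R) :
  (forall k, (k < n)%nat -> is_series (g k) (l k)) ->
  is_series (fun j => sum_lt n (fun k => g k j)) (sum_lt n l).
Proof.
  induction n; intros H; simpl.
  - generalize (is_series_finite (fun _ => 0) 0 (fun _ _ => eq_refl)). simpl.
    rewrite Rplus_0_l. auto.
  - apply (is_series_plus _ _ _ _ (IHn (fun k Hk => H k ltac:(lia))) (H n ltac:(lia))).
Qed.

Lemma phi32_term_qinv_pow_eq0 q m a2 a3 b1 b2 xi k : 0 < q -> (m < k)%nat ->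
  phi32_term (/ q ^ m) a2 a3 b1 b2 q xi k = 0.
Proof.
  intros Hq Hk. unfold phi32_term.
  rewrite (qpoch_eq0 (/ q ^ m) q k m Hk) by (field; nonzero). unfold Rdiv. ring.
Qed.

Lemma phi32_qinv_pow q m a2 a3 b1 b2 xi : 0 < q ->
  phi32 (/ q ^ m) a2 a3 b1 b2 q xi = sum_lt (S m) (phi32_term (/ q ^ m) a2 a3 b1 b2 q xi).
Proof.
  intros Hq. apply is_series_unique, is_series_finite.
  intros k Hk. apply phi32_term_qinv_pow_eq0; auto.
Qed.

Lemma Nqm_qexp q m lam : 0 < q < 1 -> 0 < (1 - q) * lam < q ^ m ->
  let c := (1 - q) * lam / q ^ m in
  Nqm q m lam = qpoch (q * c) q m * qexp q c / q ^ m.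
Proof.
  intros Hq Hx c.
  assert (Hc : 0 < c < 1) by (apply div_qpow_in_01; lra).
  assert (Hc1 : Rabs c < 1) by (rewrite Rabs_pos_eq; lra).
  unfold Nqm.
  replace (q * / q ^ m * (1 - q) * lam) with (q * c) by (unfold c; field; nonzero).
  replace (/ q ^ m * (1 - q) * lam) with c by (unfold c; field; nonzero).
  rewrite qpoch_inf_qexp by auto.
  field. nonzero.
Qed.

Lemma Nqm_neq0 q m lam : 0 < q < 1 -> 0 < (1 - q) * lam < q ^ m -> Nqm q m lam <> 0.
Proof.
  intros Hq Hx. rewrite Nqm_qexp by auto.
  set (c := (1 - q) * lam / q ^ m).
  assert (Hc : 0 < c < 1) by (apply div_qpow_in_01; lra).
  assert (Rabs c < 1) by (rewrite Rabs_pos_eq; lra).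
  pose proof (qpoch_qc_pos q c m Hq Hc). nonzero.
Qed.

Lemma pj_double_sum q m lam t j : 0 < q < 1 -> 0 < (1 - q) * lam < q ^ m ->
  let x := (1 - q) * lam in
  let y := t * (x / q ^ m) in
  t ^ j * pj lam q m j =
  sum_lt (S m) (fun k => sum_lt (S m) (fun k' =>
    / qpoch q q j * (q ^ (k + k') * y) ^ j
    * (charlier_coef q (/ x) m k * charlier_coef q (/ x) m k')))
  * (x ^ m / (Nqm q m lam * qpoch q q m)).
Proof.
  intros Hq Hx x y.
  assert (HN := Nqm_neq0 q m lam Hq Hx).
  set (c := x / q ^ m). set (d := charlier_coef q (/ x) m).
  rewrite pj_charlier by (auto; nra). fold x c d.
  transitivity (sum_lt (S m) (fun k => d k * (q ^ k) ^ j)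
                * sum_lt (S m) (fun k => d k * (q ^ k) ^ j)
                * (t ^ j * c ^ j / qpoch q q j) * (x ^ m / (Nqm q m lam * qpoch q q m)));
    [field; nonzero |].
  rewrite sum_lt_mult. f_equal. rewrite Rmult_comm, <- sum_lt_scal.
  apply sum_lt_ext; intros k Hk. rewrite <- sum_lt_scal.
  apply sum_lt_ext; intros k' Hk'.
  unfold y. fold c. rewrite !Rpow_mult_distr, pow_add, Rpow_mult_distr. field. nonzero.
Qed.

Lemma pj_pgf_double_sum q m lam t : 0 < q < 1 -> 0 < (1 - q) * lam < q ^ m -> Rabs t <= 1 ->
  let x := (1 - q) * lam in
  let y := t * (x / q ^ m) in
  is_series (fun j => t ^ j * pj lam q m j)
    (x ^ m / (Nqm q m lam * qpoch q q m) * qexp q y *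
     sum_lt (S m) (fun k => sum_lt (S m) (fun k' =>
       charlier_coef q (/ x) m k * charlier_coef q (/ x) m k' * qpoch y q (k + k')))).
Proof.
  intros Hq Hx Ht x y.
  set (K := x ^ m / (Nqm q m lam * qpoch q q m)). set (d := charlier_coef q (/ x) m).
  assert (Hc : 0 < x / q ^ m < 1) by (apply div_qpow_in_01; unfold x; lra).
  assert (Hy : forall s, Rabs (q ^ s * y) < 1).
  { intros s. pose proof (pow_pos_le1 q s Hq). pose proof (Rabs_pos t).
    assert (Rabs t * (x / q ^ m) < 1) by nra.
    unfold y. rewrite !Rabs_mult, (Rabs_pos_eq (q ^ s)), (Rabs_pos_eq (x / q ^ m)) by lra. nra. }
  replace (K * qexp q y * _) with
    (sum_lt (S m) (fun k => sum_lt (S m) (fun k' => qexp q (q ^ (k + k') * y) * (d k * d k'))) * K).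
  - apply (is_series_ext _ _ _ (fun j => eq_sym (pj_double_sum q m lam t j Hq Hx))).
    apply is_series_scal_r, is_series_sum_lt; intros k Hk.
    apply is_series_sum_lt; intros k' Hk'.
    apply is_series_scal_r, qexp_is_series; auto.
  - rewrite (Rmult_comm K), Rmult_assoc, (Rmult_comm K), <- Rmult_assoc. f_equal.
    rewrite <- sum_lt_scal. apply sum_lt_ext; intros k Hk.
    rewrite <- sum_lt_scal. apply sum_lt_ext; intros k' Hk'.
    rewrite qexp_qpowz by (auto; generalize (Hy O); simpl; rewrite Rmult_1_l; auto).
    ring.
Qed.

Theorem proposition4p1 (q : R) (m : nat) (lam t : R) :
  0 < q < 1 ->
  0 < lam < q ^ m / (1 - q) ->
  Rabs t <= 1 -> t <> 0 ->
  (forall k : nat, (m < k)%nat ->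
     phi32_term (/ q ^ m) (q / t) t (q * / q ^ m * (1 - q) * lam) q q
                (q * lam * (1 - q)) k = 0) /\
  is_series (fun j : nat => t ^ j * pj lam q m j)
    (t ^ m * qpoch_inf (/ q ^ m * (1 - q) * lam) q
       / qpoch_inf (/ q ^ m * t * lam * (1 - q)) q
     * phi32 (/ q ^ m) (q / t) t (q * / q ^ m * (1 - q) * lam) q q
             (q * lam * (1 - q))).
Proof.
  intros Hq Hlam Ht Ht0.
  split; [intros k Hk; apply phi32_term_qinv_pow_eq0; [lra | exact Hk] |].
  set (x := (1 - q) * lam).
  assert (Hx : 0 < x < q ^ m)
    by (unfold x; split; [nra | rewrite Rmult_comm; apply Rlt_div_r; lra]).
  assert (Hc : 0 < x / q ^ m < 1) by (apply div_qpow_in_01; lra).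
  assert (Hc1 : Rabs (x / q ^ m) < 1) by (rewrite Rabs_pos_eq; lra).
  assert (Htc : Rabs (t * (x / q ^ m)) < 1) by (rewrite Rabs_mult, (Rabs_pos_eq (x / q ^ m)); nra).
  assert (Hser := pj_pgf_double_sum q m lam t Hq Hx Ht). cbv zeta in Hser. fold x in Hser.
  apply (is_series_eq _ _ _ Hser).
  replace (/ q ^ m * (1 - q) * lam) with (x / q ^ m) by (unfold x; field; nonzero).
  replace (/ q ^ m * t * lam * (1 - q)) with (t * (x / q ^ m)) by (unfold x; field; nonzero).
  replace (q * / q ^ m * (1 - q) * lam) with (q * (x / q ^ m)) by (unfold x; field; nonzero).
  replace (q * lam * (1 - q)) with (q * x) by (unfold x; ring).
  rewrite Nqm_qexp by (exact Hq || exact Hx). fold x.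
  rewrite phi32_qinv_pow, phi32_sum_charlier_coef, !qpoch_inf_qexp by (auto; lra).
  pose proof (qpoch_qc_pos q (x / q ^ m) m Hq Hc).
  field. nonzero.
Qed.
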